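(* Let $\epsilon=\epsilon_1\cdots\epsilon_n$ be an inversion sequence to which Algorithm A (described below) is applied, and let $\epsilon'=\epsilon'_1\cdots\epsilon'_n$ be the resulting sequence. If the entry in position $i$ is replaced during the algorithm (i.e. an assignment to $\mathrm{seq}[i]$ is made), then (i) $\epsilon_i<\epsilon_{i+1}$, and (ii) the replacement entry satisfies $\epsilon'_i<\epsilon_{i+1}$.
   Context: An inversion sequence of length $n$ is an integer sequence with $0\le\epsilon_i<i$ for all $i$. The reduction of an integer word replaces each occurrence of its $k$-th smallest distinct value by $k-1$; a consecutive pattern $\underline{p_1p_2p_3p_4}$ occurs in a sequence at position $i$ if the reduction of its entries in positions $i,\dots,i+3$ equals $p_1p_2p_3p_4$. Let $p=\underline{0102}$ and $q=\underline{0112}$. Algorithm A, on input an integer sequence $\mathrm{seq}=\epsilon_1\cdots\epsilon_n$: let $E_p$, $E_q$ be the sets of positions of occurrences of $p$, resp. $q$, in the input sequence; set $\mathrm{last}:=$ null. For $i=1,2,\dots,n$ in order: let $N_p,N_q$ be the sets of positions of occurrences of $p$, resp. $q$, in the current sequence. If $i-2\in E_p$: set $\mathrm{last}:=\mathrm{seq}[i]$ and $\mathrm{seq}[i]:=\mathrm{seq}[i-1]$. Else if $i-2\in E_q$: set $\mathrm{last}:=\mathrm{seq}[i]$ and $\mathrm{seq}[i]:=\mathrm{seq}[i-2]$. Else if $i-2\in N_p$ or $i-2\in N_q$: swap the values of $\mathrm{seq}[i]$ and $\mathrm{last}$. Output $\mathrm{seq}$. *)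

From mathcomp Require Import all_boot.
Set Implicit Arguments. Unset Strict Implicit. Unset Printing Implicit Defensive.

(* Positions are 1-indexed as in the paper: entry s i = epsilon_i. *)
Definition entry (s : seq nat) (i : nat) : nat := nth 0 s i.-1.

Definition inversion_seq (s : seq nat) : Prop :=
  forall i, 1 <= i <= size s -> entry s i < i.

Definition reduction (w : seq nat) : seq nat :=
  map (fun x => index x (sort leq (undup w))) w.

Definition occurs_at (pat s : seq nat) (j : nat) : bool :=
  [&& 1 <= j, j + 3 <= size s & reduction (take 4 (drop j.-1 s)) == pat].

Definition pat_p : seq nat := [:: 0; 1; 0; 2].
Definition pat_q : seq nat := [:: 0; 1; 1; 2].

(* State of Algorithm A: current sequence, the variable [last]
   (None = null), and the list of positions to which an assignment
   seq[i] := ... has been made. *)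
Definition stateA := (seq nat * option nat * seq nat)%type.

(* Iteration i of Algorithm A; [e] is the input sequence (used for E_p, E_q).
   N_p, N_q are the occurrence sets of the current sequence s.
   The swap branch with last = null is never reached;
   by convention it does nothing. *)
Definition stepA (e : seq nat) (st : stateA) (i : nat) : stateA :=
  let: (s, l, A) := st in
  if (2 < i) && occurs_at pat_p e (i - 2) then
    (set_nth 0 s i.-1 (entry s (i - 1)), Some (entry s i), i :: A)
  else if (2 < i) && occurs_at pat_q e (i - 2) then
    (set_nth 0 s i.-1 (entry s (i - 2)), Some (entry s i), i :: A)
  else if (2 < i) && (occurs_at pat_p s (i - 2) || occurs_at pat_q s (i - 2)) then
    match l with
    | Some v => (set_nth 0 s i.-1 v, Some (entry s i), i :: A)
    | None => st
    end
  else st.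

Definition algA_run (e : seq nat) : stateA :=
  foldl (stepA e) (e, None, [::]) (iota 1 (size e)).

Definition algA (e : seq nat) : seq nat := (algA_run e).1.1.

Definition algA_assigned (e : seq nat) : seq nat := (algA_run e).2.

From mathcomp Require Import all_boot zify.
Set Implicit Arguments. Unset Strict Implicit.

(* Along the run of Algorithm A we maintain an invariant: every position j
   assigned so far satisfies e_j < e_{j+1} and s_j < e_{j+1} (s the current
   sequence), the other positions still hold their input values, and [last]
   holds the input value e_k of the most recently assigned position k.
   At step i = j+2 the first two branches are triggered by an occurrence of
   0102 or 0112 in e at j, whose order relations give both inequalities.
   In the swap branch the current sequence has an occurrence at j while e has
   none, so position j or j+1 has been changed, i.e. k is j or j+1; in both
   cases the swapped-in value e_k lies below s_{j+3} = e_{j+3}. *)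

Lemma index_sort_undup_lt (w : seq nat) :
  {in w &, forall x y,
    (index x (sort leq (undup w)) < index y (sort leq (undup w))) = (x < y)}.
Proof.
move=> x y xw yw; set r := sort leq (undup w).
have r_sorted : sorted ltn r.
  by rewrite ltn_sorted_uniq_leq sort_uniq undup_uniq (sort_sorted leq_total).
have xr : x \in r by rewrite mem_sort mem_undup.
have yr : y \in r by rewrite mem_sort mem_undup.
apply/idP/idP => [|x_lt_y]; first exact: (sorted_ltn_index ltn_trans r_sorted).
case: ltngtP => // [/(sorted_ltn_index ltn_trans r_sorted _ _ yr xr)|/(index_inj 0 xr yr)].
  by rewrite ltnNge ltnW.
by move=> eq_xy; rewrite eq_xy ltnn in x_lt_y.
Qed.

Lemma nth_reduction_lt (w : seq nat) i k : i < size w -> k < size w ->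
  (nth 0 (reduction w) i < nth 0 (reduction w) k) = (nth 0 w i < nth 0 w k).
Proof. by move=> iw kw; rewrite !(nth_map 0) // index_sort_undup_lt ?mem_nth. Qed.

Lemma nth_reduction_eq (w : seq nat) i k : i < size w -> k < size w ->
  (nth 0 (reduction w) i == nth 0 (reduction w) k) = (nth 0 w i == nth 0 w k).
Proof.
move=> iw kw; rewrite !(nth_map 0) //; apply/eqP/eqP => [|-> //].
by apply: (index_inj 0); rewrite mem_sort mem_undup mem_nth.
Qed.

Lemma reduction_0102 a b c d : reduction [:: a; b; c; d] = pat_p ->
  [/\ a = c, a < b & b < d].
Proof.
move=> red; have ltE := @nth_reduction_lt [:: a; b; c; d].
have eqE := @nth_reduction_eq [:: a; b; c; d].
move: red ltE eqE => -> ltE eqE.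
by split; [apply/eqP; rewrite -(eqE 0 2) | rewrite -(ltE 0 1) | rewrite -(ltE 1 3)].
Qed.

Lemma reduction_0112 a b c d : reduction [:: a; b; c; d] = pat_q ->
  [/\ b = c, a < b & b < d].
Proof.
move=> red; have ltE := @nth_reduction_lt [:: a; b; c; d].
have eqE := @nth_reduction_eq [:: a; b; c; d].
move: red ltE eqE => -> ltE eqE.
by split; [apply/eqP; rewrite -(eqE 1 2) | rewrite -(ltE 0 1) | rewrite -(ltE 1 3)].
Qed.

Lemma take4_drop_entries s j : 0 < j -> j + 3 <= size s ->
  take 4 (drop j.-1 s) = [:: entry s j; entry s j.+1; entry s j.+2; entry s j.+3].
Proof.
move=> j_gt0 js.
have size4 : size (take 4 (drop j.-1 s)) = 4 by rewrite size_takel // size_drop; lia.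
apply: (@eq_from_nth _ 0) => [|k]; rewrite size4 // => k_lt4.
rewrite nth_take // nth_drop /entry.
by case: k k_lt4 => [|[|[|[|]]]] //= _; congr nth; lia.
Qed.

Lemma occurs_atE pat s j : occurs_at pat s j =
  [&& 0 < j, j + 3 <= size s &
      reduction [:: entry s j; entry s j.+1; entry s j.+2; entry s j.+3] == pat].
Proof.
rewrite /occurs_at; case: (ltnP 0 j) => //= j_gt0.
by case: (leqP (j + 3) (size s)) => //= js; rewrite take4_drop_entries.
Qed.

Lemma occurs_at_p s j : occurs_at pat_p s j ->
  [/\ j + 3 <= size s, entry s j = entry s j.+2,
      entry s j < entry s j.+1 & entry s j.+1 < entry s j.+3].
Proof. by rewrite occurs_atE => /and3P [_ js /eqP/reduction_0102 []]. Qed.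

Lemma occurs_at_q s j : occurs_at pat_q s j ->
  [/\ j + 3 <= size s, entry s j.+1 = entry s j.+2,
      entry s j < entry s j.+1 & entry s j.+1 < entry s j.+3].
Proof. by rewrite occurs_atE => /and3P [_ js /eqP/reduction_0112 []]. Qed.

Lemma occurs_at_pq s j : occurs_at pat_p s j || occurs_at pat_q s j ->
  [/\ j + 3 <= size s, entry s j.+1 < entry s j.+3 & entry s j.+2 < entry s j.+3].
Proof.
by case/orP => [/occurs_at_p [js e02 lt01 lt13] | /occurs_at_q [js e12 lt01 lt13]];
  split => //; lia.
Qed.

Lemma occurs_at_eq_entries pat s t j : size s = size t ->
  (forall k, j <= k <= j + 3 -> entry s k = entry t k) ->
  occurs_at pat s j = occurs_at pat t j.
Proof.
move=> st_size st_entries; rewrite !occurs_atE st_size.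
by rewrite !st_entries //; lia.
Qed.

Lemma entry_set_nth s m v k : 0 < m ->
  entry (set_nth 0 s m v) k = if k == m.+1 then v else entry s k.
Proof.
move=> m_gt0; rewrite /entry nth_set_nth /=.
by case: k => [|k] //=; rewrite eq_sym eqn0Ngt m_gt0.
Qed.

Definition algA_inv (e : seq nat) (m : nat) (st : stateA) : Prop :=
  let: (s, l, A) := st in
  [/\ size s = size e,
      forall j, j \notin A -> entry s j = entry e j,
      forall j, j \in A ->
        [/\ j <= m, entry e j < entry e j.+1 & entry s j < entry e j.+1]
    & forall v, l = Some v ->
        exists k, [/\ k \in A, v = entry e k & {in A, forall j, j <= k}]].

Section AlgorithmAInvariant.

Variable e : seq nat.

Lemma algA_inv0 : algA_inv e 0 (e, None, [::]).
Proof. by []. Qed.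

Lemma algA_inv_skip m st : algA_inv e m st -> algA_inv e m.+1 st.
Proof.
case: st => [[s l] A] [? ? s_assigned ?].
by split=> // j /s_assigned [j_le_m ? ?]; split=> //; apply: leqW.
Qed.

Lemma algA_inv_fresh m s l A : algA_inv e m (s, l, A) ->
  forall j, m < j -> entry s j = entry e j.
Proof.
case=> _ s_fixed s_assigned _ j m_lt_j; apply: s_fixed.
by apply/negP => /s_assigned []; lia.
Qed.

Lemma algA_inv_entry_lt m s l A k x : algA_inv e m (s, l, A) ->
  entry e k < x -> entry e k.+1 <= x -> entry s k < x.
Proof.
case=> _ s_fixed s_assigned _ ek_lt ek1_le.
case: (boolP (k \in A)) => [/s_assigned [_ _ sk_lt] | /s_fixed ->] //.
exact: leq_trans sk_lt ek1_le.
Qed.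

Lemma algA_inv_assign m s l A v : algA_inv e m (s, l, A) ->
  0 < m -> m < size e -> entry e m.+1 < entry e m.+2 -> v < entry e m.+2 ->
  algA_inv e m.+1 (set_nth 0 s m v, Some (entry s m.+1), m.+1 :: A).
Proof.
move=> inv m_gt0 m_lt em_lt v_lt.
have fresh := algA_inv_fresh inv.
case: inv => s_size s_fixed s_assigned _.
split.
- by rewrite size_set_nth s_size; apply/maxn_idPr.
- move=> j; rewrite inE negb_or entry_set_nth // => /andP [/negbTE -> j_nA].
  exact: s_fixed.
- move=> j; rewrite inE entry_set_nth //.
  case: eqP => [-> _ | _ /= /s_assigned [j_le ? ?]]; first by split.
  by split=> //; apply: leqW.
- move=> _ [<-]; exists m.+1; split; first by rewrite inE eqxx.
    exact: fresh.
  by move=> j; rewrite inE => /orP [/eqP -> // | /s_assigned [j_le _ _]]; apply: leqW.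
Qed.

Lemma occurs_at_unassigned pat j s l A : algA_inv e j.+1 (s, l, A) ->
  j \notin A -> j.+1 \notin A -> occurs_at pat s j = occurs_at pat e j.
Proof.
move=> inv j_nA j1_nA; have fresh := algA_inv_fresh inv.
case: inv => s_size s_fixed _ _.
apply: occurs_at_eq_entries => // k /andP [j_le k_le].
case: (ltnP j.+1 k) => [/fresh // | k_le1].
have [-> | ->] : k = j \/ k = j.+1 by lia.
  exact: s_fixed.
exact: s_fixed.
Qed.

Lemma algA_inv_step_p j s l A : algA_inv e j.+1 (s, l, A) ->
  occurs_at pat_p e j ->
  algA_inv e j.+2 (set_nth 0 s j.+1 (entry s j.+1), Some (entry s j.+2), j.+2 :: A).
Proof.
move=> inv /occurs_at_p [js e02 lt01 lt13].
apply: (algA_inv_assign inv) => //; first lia.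
- by rewrite -e02; apply: ltn_trans lt13.
- by apply: (algA_inv_entry_lt inv) => //; rewrite -e02 ltnW // (ltn_trans lt01).
Qed.

Lemma algA_inv_step_q j s l A : algA_inv e j.+1 (s, l, A) ->
  occurs_at pat_q e j ->
  algA_inv e j.+2 (set_nth 0 s j.+1 (entry s j), Some (entry s j.+2), j.+2 :: A).
Proof.
move=> inv /occurs_at_q [js e12 lt01 lt13].
apply: (algA_inv_assign inv) => //; first lia.
- by rewrite -e12.
- by apply: (algA_inv_entry_lt inv) => //; [apply: ltn_trans lt13 | apply: ltnW].
Qed.

Lemma algA_inv_step_swap j s A v : algA_inv e j.+1 (s, Some v, A) ->
  ~~ occurs_at pat_p e j -> ~~ occurs_at pat_q e j ->
  occurs_at pat_p s j || occurs_at pat_q s j ->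
  algA_inv e j.+2 (set_nth 0 s j.+1 v, Some (entry s j.+2), j.+2 :: A).
Proof.
move=> inv not_p not_q occ.
have [js s13 s23] := occurs_at_pq occ.
have fresh := algA_inv_fresh inv.
have unassigned := occurs_at_unassigned _ inv.
case: (inv) => s_size s_fixed s_assigned /(_ v erefl) [k [kA vk k_max]].
rewrite (fresh j.+3) // in s13 s23; rewrite (fresh j.+2) // in s23.
have k_le : k <= j.+1 by case: (s_assigned k kA).
have j1_nA : k <= j -> j.+1 \notin A by move=> k_le_j; apply/negP => /k_max; lia.
have v_lt : v < entry e j.+3.
  have [k_j1 | [k_j | k_lt]] : k = j.+1 \/ k = j \/ k < j by lia.
  - subst k; case: (s_assigned _ kA) => _ ek_lt _.
    by rewrite vk (ltn_trans ek_lt s23).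
  - subst k; case: (s_assigned _ kA) => _ ek_lt _.
    have s1 : entry s j.+1 = entry e j.+1 by apply/s_fixed/j1_nA.
    by rewrite vk (ltn_trans ek_lt) // -s1.
  - have j_nA : j \notin A by apply/negP => /k_max; lia.
    move: occ; rewrite !unassigned ?j1_nA ?(ltnW k_lt) //.
    by rewrite (negbTE not_p) (negbTE not_q).
by apply: (algA_inv_assign inv); rewrite -?s_size //; lia.
Qed.

Lemma algA_inv_step m st : algA_inv e m st -> algA_inv e m.+1 (stepA e st m.+1).
Proof.
case: st => [[s l] A] inv.
case: m inv => [|j] inv; first exact: algA_inv_skip.
rewrite /stepA subn2 /=.
case: ifP => [/andP [_ /(algA_inv_step_p inv)] | not_p] //.
case: ifP => [/andP [_ /(algA_inv_step_q inv)] | not_q] //.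
case: ifP => [/andP [j_gt0 occ] | _]; last exact: algA_inv_skip.
rewrite j_gt0 /= in not_p not_q.
case: l inv => [v inv | inv]; last exact: algA_inv_skip.
by apply: algA_inv_step_swap; rewrite ?not_p ?not_q.
Qed.

Lemma algA_inv_run m : algA_inv e m (foldl (stepA e) (e, None, [::]) (iota 1 m)).
Proof.
elim: m => [|m IH]; first exact: algA_inv0.
by rewrite -addn1 iotaD foldl_cat add1n addn1; apply: algA_inv_step.
Qed.

End AlgorithmAInvariant.

Theorem lemma4 (e : seq nat) :
  inversion_seq e ->
  forall i : nat, i \in algA_assigned e ->
    entry e i < entry e i.+1 /\ entry (algA e) i < entry e i.+1.
Proof.
move=> _ i; rewrite /algA_assigned /algA /algA_run.
case: (foldl _ _ _) (algA_inv_run e (size e)) => [[s l] A] [_ _ A_assigned _] /=.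
by case/A_assigned.
Qed.
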